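(* Let $(\mathbf{a}_1,\mathbf{a}_2,\mathbf{a}_3)$ be a weakly generic triple, fix $j\in\{0,\dots,f-1\}$, and let $s\in S_3$ be the permutation with $a_{s(1),f-j-1}>a_{s(2),f-j-1}>a_{s(3),f-j-1}$. Let $R$ be an $\mathcal{O}$-algebra and $I\in\mathcal{I}(R)$. Then $$\mathrm{Ad}\big(v^{a_{s(1),f-j-1}},v^{a_{s(2),f-j-1}},v^{a_{s(3),f-j-1}}\big)\big(\varphi(I)^{-1}\big)\in\mathcal{D}_3(R).$$
   Context: $p>3$ prime, $\mathcal{O}$ the ring of integers of a finite extension of $\mathbb{Q}_p$. $\mathbf{a}_k=(a_{k,j})_{j=0}^{f-1}$ ($k=1,2,3$) are $f$-tuples of integers in $[0,p-1]$; the triple is weakly generic if $3\le|a_{1,j}-a_{2,j}|,|a_{2,j}-a_{3,j}|,|a_{1,j}-a_{3,j}|\le p-4$ for all $j$. $\mathcal{I}(R)$ is the set of $M\in\mathrm{GL}_3(R[[v]])$ that are upper triangular modulo $v$; $\mathcal{D}_3(R)$ is the set of $M\in\mathrm{GL}_3(R[[v]])$ that are diagonal modulo $v^3$. $\varphi$ is applied entrywise, where $\varphi:R[[v]]\to R[[v]]$ is the $R$-linear ring endomorphism with $v\mapsto v^p$. $\mathrm{Ad}(v^{b_1},v^{b_2},v^{b_3})(M)=\mathrm{diag}(v^{b_1},v^{b_2},v^{b_3})M\,\mathrm{diag}(v^{-b_1},v^{-b_2},v^{-b_3})$. *)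

From HB Require Import structures.
From mathcomp Require Import all_boot all_algebra.
From mathcomp Require Import boolp.

Set Implicit Arguments.
Unset Strict Implicit.
Unset Printing Implicit Defensive.

Import GRing.Theory.
Local Open Scope ring_scope.

Section PowerSeries.
Variable R : comNzRingType.

Record pseries := PSeries { pscoef : nat -> R }.

Lemma pseries_eq (a b : pseries) : (forall n, pscoef a n = pscoef b n) -> a = b.
Proof.
by case: a b => [a] [b] /= H; congr PSeries; apply: functional_extensionality_dep.
Qed.

HB.instance Definition _ := gen_eqMixin pseries.
HB.instance Definition _ := gen_choiceMixin pseries.

Definition ps_zero := PSeries (fun _ => 0 : R).
Definition ps_add a b := PSeries (fun n => pscoef a n + pscoef b n).
Definition ps_opp a := PSeries (fun n => - pscoef a n).

Lemma ps_addA : associative ps_add.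
Proof. by move=> a b c; apply: pseries_eq => n /=; rewrite addrA. Qed.
Lemma ps_addC : commutative ps_add.
Proof. by move=> a b; apply: pseries_eq => n /=; rewrite addrC. Qed.
Lemma ps_add0 : left_id ps_zero ps_add.
Proof. by move=> a; apply: pseries_eq => n /=; rewrite add0r. Qed.
Lemma ps_addN : left_inverse ps_zero ps_opp ps_add.
Proof. by move=> a; apply: pseries_eq => n /=; rewrite addNr. Qed.

HB.instance Definition _ :=
  GRing.isZmodule.Build pseries ps_addA ps_addC ps_add0 ps_addN.

Definition ps_one := PSeries (fun n => (n == 0%N)%:R : R).
Definition ps_mul a b :=
  PSeries (fun n => \sum_(i < n.+1) pscoef a i * pscoef b (n - i)).

(* truncation to a polynomial, used to transport the ring laws *)
Definition ps_trunc n (a : pseries) : {poly R} := \poly_(i < n.+1) pscoef a i.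

Lemma ps_mul_trunc a b m n : (m <= n)%N ->
  pscoef (ps_mul a b) m = (ps_trunc n a * ps_trunc n b)`_m.
Proof.
move=> le_mn; rewrite coefM /=; apply: eq_bigr => i _.
rewrite !coef_poly.
have hi : (i < n.+1)%N by rewrite ltnS (leq_trans _ le_mn) // -ltnS.
have hmi : (m - i < n.+1)%N by rewrite ltnS (leq_trans (leq_subr _ _) le_mn).
by rewrite hi hmi.
Qed.

Lemma ps_truncD n a b : ps_trunc n (ps_add a b) = ps_trunc n a + ps_trunc n b.
Proof. by apply/polyP => i; rewrite coefD !coef_poly /=; case: ifP; rewrite ?addr0. Qed.

Lemma ps_trunc1 n : ps_trunc n ps_one = 1.
Proof.
apply/polyP => i; rewrite coef_poly coefC /=.
by case: i => [|i] //=; case: ifP.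
Qed.

Lemma ps_mulA : associative ps_mul.
Proof.
move=> a b c; apply: pseries_eq => n.
rewrite (ps_mul_trunc _ _ (leqnn n)) [RHS](ps_mul_trunc _ _ (leqnn n)).
have E1 : (ps_trunc n (ps_mul a b) * ps_trunc n c)`_n
          = (ps_trunc n a * ps_trunc n b * ps_trunc n c)`_n.
  rewrite !coefM; apply: eq_bigr => i _; rewrite coef_poly ltn_ord.
  by rewrite (ps_mul_trunc _ _ (_ : (i <= n)%N)) // -ltnS.
have E2 : (ps_trunc n a * ps_trunc n (ps_mul b c))`_n
          = (ps_trunc n a * (ps_trunc n b * ps_trunc n c))`_n.
  rewrite !coefM; apply: eq_bigr => i _; congr (_ * _).
  have hi : (n - i < n.+1)%N by rewrite ltnS leq_subr.
  by rewrite coef_poly hi (ps_mul_trunc _ _ (_ : (n - i <= n)%N)) ?leq_subr.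
by rewrite E1 E2 mulrA.
Qed.

Lemma ps_mulC : commutative ps_mul.
Proof.
move=> a b; apply: pseries_eq => n.
by rewrite !(ps_mul_trunc _ _ (leqnn n)) mulrC.
Qed.

Lemma ps_mul1 : left_id ps_one ps_mul.
Proof.
move=> a; apply: pseries_eq => n.
rewrite (ps_mul_trunc _ _ (leqnn n)) ps_trunc1 mul1r coef_poly ltnSn //.
Qed.

Lemma ps_mulDl : left_distributive ps_mul ps_add.
Proof.
move=> a b c; apply: pseries_eq => n.
rewrite (ps_mul_trunc _ _ (leqnn n)) ps_truncD mulrDl coefD.
rewrite -!(ps_mul_trunc _ _ (leqnn n)) //.
Qed.

Lemma ps_one_neq0 : ps_one != 0.
Proof.
apply/eqP => /(congr1 (fun x => pscoef x 0%N)) /= /eqP.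
by rewrite oner_eq0.
Qed.

HB.instance Definition _ :=
  GRing.Zmodule_isComNzRing.Build pseries ps_mulA ps_mulC ps_mul1 ps_mulDl
    ps_one_neq0.

Definition ps_v : pseries := PSeries (fun n => (n == 1%N)%:R).

(* Frobenius-type endomorphism phi : R[[v]] -> R[[v]], R-linear, v |-> v^p *)
Definition ps_phi (p : nat) (a : pseries) : pseries :=
  PSeries (fun n => if (p %| n)%N then pscoef a (n %/ p) else 0).

End PowerSeries.

Arguments ps_v {R}.

Notation "R [[ 'v' ]]" := (pseries R) (at level 2, format "R [[ 'v' ]]").

Section Matrices.
Variable R : comNzRingType.

Definition inGL3 (M : 'M[pseries R]_3) : Prop :=
  exists N : 'M[pseries R]_3, M *m N = 1%:M /\ N *m M = 1%:M.

(* \mathcal{I}(R): elements of GL_3(R[[v]]) upper triangular modulo v *)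
Definition in_Iwahori (M : 'M[pseries R]_3) : Prop :=
  inGL3 M /\ forall i j : 'I_3, (j < i)%N -> pscoef (M i j) 0%N = 0.

(* \mathcal{D}_3(R): elements of GL_3(R[[v]]) diagonal modulo v^3 *)
Definition in_D3 (M : 'M[pseries R]_3) : Prop :=
  inGL3 M /\ forall i j : 'I_3, i != j -> forall n, (n < 3)%N -> pscoef (M i j) n = 0.

Definition vdiag (b : 'I_3 -> nat) : 'M[pseries R]_3 :=
  diag_mx (\row_i (ps_v ^+ b i)).

End Matrices.

Definition in_range (p f : nat) (a : 'I_3 -> 'I_f -> nat) : Prop :=
  forall k j, (a k j <= p - 1)%N.

Definition weakly_generic (p f : nat) (a : 'I_3 -> 'I_f -> nat) : Prop :=
  forall (j : 'I_f) (k l : 'I_3), k != l ->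
    (3 <= `|(a k j)%:Z - (a l j)%:Z|)%N /\ (`|(a k j)%:Z - (a l j)%:Z| <= p - 4)%N.

Arguments in_range : clear implicits.
Arguments weakly_generic : clear implicits.
Arguments vdiag {R}.

From HB Require Import structures.
From mathcomp Require Import all_boot all_algebra all_fingroup zify.

(** Conjugating by diag(v^b) multiplies the (i,k) entry by v^(b_i - b_k).
    Above the diagonal this exponent is at least 3 by weak genericity.
    Below it the exponent is negative, but at least -(p-4), while the
    corresponding entry of phi(I)^-1 = phi(I^-1) is divisible by v^p,
    because I^-1 is again upper triangular modulo v and phi sends v to v^p.
    So the conjugate is again a power series matrix, diagonal modulo v^3,
    and it is invertible since the same argument applies to phi(I). *)

Set Implicit Arguments.
Unset Strict Implicit.
Unset Printing Implicit Defensive.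

Local Open Scope ring_scope.
Import GRing.Theory.

Section PowerSeriesCoefficients.
Variable R : comNzRingType.
Implicit Types x y : pseries R.

Lemma pscoefM x y n :
  pscoef (x * y) n = \sum_(i < n.+1) pscoef x i * pscoef y (n - i).
Proof. by []. Qed.

Lemma coef_vM y n : pscoef (ps_v * y) n = if n is n'.+1 then pscoef y n' else 0.
Proof.
rewrite pscoefM; case: n => [|n]; first by rewrite big_ord1 mul0r.
rewrite 2!big_ord_recl /= mul0r add0r mul1r subSS subn0.
by rewrite big1 ?addr0 // => i _; rewrite mul0r.
Qed.

Lemma coef_vXM d y n :
  pscoef (ps_v ^+ d * y) n = if (d <= n)%N then pscoef y (n - d) else 0.
Proof.
elim: d n => [|d IHd] n; first by rewrite expr0 mul1r subn0.
by rewrite exprS -mulrA coef_vM; case: n.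
Qed.

Lemma mulIvX d x y : x * ps_v ^+ d = y * ps_v ^+ d -> x = y.
Proof.
rewrite ![_ * ps_v ^+ d]mulrC => Exy; apply: pseries_eq => n.
have := congr1 (fun z => pscoef z (n + d)) Exy.
by rewrite !coef_vXM leq_addl addnK.
Qed.

Definition vX_dvd d x := forall n, (n < d)%N -> pscoef x n = 0.

(* The quotient x / v^d; it discards the d lowest coefficients, so it only
   deserves the name when [vX_dvd d x]. *)
Definition ps_divvX d x := PSeries (fun n => pscoef x (n + d)).

Lemma vXM_divvX d x : vX_dvd d x -> ps_v ^+ d * ps_divvX d x = x.
Proof.
move=> dvd_x; apply: pseries_eq => n; rewrite coef_vXM /=.
by case: leqP => [le_dn|/dvd_x ->//]; rewrite subnK.
Qed.

Lemma vX_dvdW d e x : (d <= e)%N -> vX_dvd e x -> vX_dvd d x.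
Proof. by move=> le_de dvd_x n lt_nd; rewrite dvd_x // (leq_trans lt_nd). Qed.

Lemma vX_dvd_vXM e d y : (e <= d)%N -> vX_dvd e (ps_v ^+ d * y).
Proof.
by move=> le_ed n lt_ne; rewrite coef_vXM leqNgt (leq_trans lt_ne le_ed).
Qed.

Lemma vX_dvd_divvX d e x : vX_dvd (d + e) x -> vX_dvd e (ps_divvX d x).
Proof. by move=> dvd_x n lt_ne /=; rewrite dvd_x // addnC ltn_add2l. Qed.

End PowerSeriesCoefficients.

Definition ps_const (R : comNzRingType) (x : pseries R) : R := pscoef x 0.

Lemma ps_const_is_nmod_morphism R : nmod_morphism (@ps_const R).
Proof. by []. Qed.

Lemma ps_const_is_monoid_morphism R : monoid_morphism (@ps_const R).
Proof. by split => // x y; rewrite /ps_const pscoefM big_ord1. Qed.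

HB.instance Definition _ R := GRing.isNmodMorphism.Build _ _ (@ps_const R)
  (ps_const_is_nmod_morphism R).
HB.instance Definition _ R := GRing.isMonoidMorphism.Build _ _ (@ps_const R)
  (ps_const_is_monoid_morphism R).

Section Frobenius.
Variable R : comNzRingType.
Implicit Types x y : pseries R.

Lemma vX_dvd_phi p x : pscoef x 0 = 0 -> vX_dvd p (ps_phi p x).
Proof.
move=> x0 n /=; case: ifP => // /dvdnP [ [|m] ->]; first by rewrite mul0n div0n.
by rewrite mulSn ltnNge leq_addr.
Qed.

(* [ps_phi p] is a ring endomorphism only for [p > 0], hence the [q.+1]. *)
Variable q : nat.
Local Notation p := q.+1.

Lemma big_nat_dvdn (G : nat -> R) m :
  \sum_(0 <= i < (p * m).+1) (if (p %| i)%N then G (i %/ p)%N else 0)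
  = \sum_(0 <= k < m.+1) G k.
Proof.
elim: m => [|m IHm]; first by rewrite muln0 !big_nat1 dvdn0 div0n.
rewrite (big_cat_nat _ (n := (p * m).+1)) //=; last by rewrite ltnS leq_pmul2l.
rewrite IHm [RHS]big_nat_recr //=; congr (_ + _).
rewrite big_nat_recr /=; last by rewrite ltn_pmul2l.
rewrite dvdn_mulr // mulKn // big_nat_cond big1 ?add0r // => i.
case/andP=> /andP [lo hi] _; case: ifP => // /dvdnP [k def_i].
move: lo hi; rewrite def_i mulnC (mulnC p) !ltn_pmul2r // ltnS => lt_mk.
by rewrite leqNgt lt_mk.
Qed.

Lemma phi_is_nmod_morphism : nmod_morphism (ps_phi (R := R) p).
Proof.
split; first by apply: pseries_eq => n /=; case: ifP.
by move=> x y; apply: pseries_eq => n /=; case: ifP; rewrite ?addr0.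
Qed.

Lemma phi_is_monoid_morphism : monoid_morphism (ps_phi (R := R) p).
Proof.
split.
  apply: pseries_eq => -[|n] /=; first by [].
  case: ifP => // /dvdnP [k def_n]; rewrite def_n mulnK //.
  by case: k def_n.
move=> x y; apply: pseries_eq => n; rewrite pscoefM /=.
case: (boolP (p %| n)%N) => [/dvdnP [m ->]|ndvd_n]; last first.
  rewrite big1 // => i _ /=; case: ifP => [dvd_i|]; last by rewrite mul0r.
  case: ifP => [dvd_ni|]; last by rewrite mulr0.
  by case/negP: ndvd_n; rewrite -(subnKC (ltnSE (ltn_ord i))) dvdn_addr.
rewrite mulnK // mulnC -(big_mkord xpredT (fun k => pscoef x k * pscoef y (m - k))).
rewrite -(big_nat_dvdn (fun k => pscoef x k * pscoef y (m - k))) big_mkord.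
apply: eq_bigr => i _; case: ifP => [/dvdnP [k def_i]|]; last by rewrite mul0r.
by rewrite def_i (mulnC p) -mulnBl dvdn_mull // !mulnK.
Qed.

End Frobenius.

HB.instance Definition _ R q := GRing.isNmodMorphism.Build _ _ (ps_phi q.+1)
  (phi_is_nmod_morphism R q).
HB.instance Definition _ R q := GRing.isMonoidMorphism.Build _ _ (ps_phi q.+1)
  (phi_is_monoid_morphism R q).

Lemma trig_mx_linv (R : comNzRingType) n (U V : 'M[R]_n) :
  U *m V = 1%:M -> is_trig_mx U -> is_trig_mx V.
Proof.
move=> UV /is_trig_mxP U_trig; apply/is_trig_mxP => i.
have [m] := ubnP i; elim: m i => // m IHm i /ltnSE le_im k lt_ik.
have diag_row (k' : 'I_n) : (i <= k')%N -> U i i * V i k' = (i == k')%:R.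
  move=> le_ik'; have := congr1 (fun M : 'M[R]_n => M i k') UV.
  rewrite !mxE => <-; rewrite (bigD1 i) //= big1 ?addr0 // => l ne_li.
  case: (ltngtP l i) => [lt_li|lt_il|/val_inj eq_li].
  - by rewrite (IHm l) ?mulr0 ?(leq_trans lt_li le_im) ?(leq_trans lt_li le_ik').
  - by rewrite U_trig ?mul0r.
  - by rewrite eq_li eqxx in ne_li.
have Vii : V i i * U i i = 1.
  by rewrite mulrC diag_row // eqxx.
have ne_ik : (i == k) = false by apply/eqP => eq_ik; rewrite eq_ik ltnn in lt_ik.
rewrite -[V i k]mul1r -Vii -mulrA diag_row ?ne_ik ?mulr0 //; exact: ltnW.
Qed.

Section ConjugationByVDiag.
Variables (R : comNzRingType) (b : 'I_3 -> nat).
Implicit Types X A B : 'M[pseries R]_3.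

Definition Ad_v X : 'M[pseries R]_3 :=
  \matrix_(i, k) if (b k <= b i)%N then ps_v ^+ (b i - b k) * X i k
                 else ps_divvX (b k - b i) (X i k).

Lemma vdiag_mulmx X :
  (forall i k, (b i < b k)%N -> vX_dvd (b k - b i) (X i k)) ->
  vdiag b *m X = Ad_v X *m vdiag b.
Proof.
move=> X_dvd; apply/matrixP => i k; rewrite mul_diag_mx mul_mx_diag !mxE.
case: leqP => [le_ki|lt_ik]; first by rewrite mulrAC -exprD subnK.
have -> : ps_v ^+ b k = ps_v ^+ (b k - b i) * ps_v ^+ b i :> pseries R.
  by rewrite -exprD subnK // ltnW.
by rewrite mulrA (mulrC (ps_divvX _ _)) vXM_divvX; [exact: mulrC | exact: X_dvd].
Qed.

Lemma mulmx_vdiagI A B : A *m vdiag b = B *m vdiag b -> A = B.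
Proof.
move=> AB; apply/matrixP => i k; apply: (@mulIvX _ (b k)).
by have := congr1 (fun M : 'M[pseries R]_3 => M i k) AB; rewrite !mul_mx_diag !mxE.
Qed.

End ConjugationByVDiag.

Lemma weakly_generic_gap p f (a : 'I_3 -> 'I_f -> nat) (j : 'I_f) (s : 'S_3) :
  weakly_generic p f a ->
  (a (s (1%R : 'I_3)) j < a (s (0%R : 'I_3)) j)%N ->
  (a (s (2%R : 'I_3)) j < a (s (1%R : 'I_3)) j)%N ->
  forall i k : 'I_3, (k < i)%N -> (3 <= a (s k) j - a (s i) j <= p - 4)%N.
Proof.
move=> generic lt10 lt21.
have ord3E (i : 'I_3) : [\/ i = 0%R, i = 1%R | i = 2%R].
  by case: i => -[|[|[|i] ] ] // lt_i3; [constructor 1|constructor 2|constructor 3];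
    apply: val_inj.
have decr (i k : 'I_3) : (k < i)%N -> (a (s i) j < a (s k) j)%N.
  by case: (ord3E i) => ->; case: (ord3E k) => -> //= _; apply: ltn_trans lt21 lt10.
move=> i k lt_ki; have ne_sisk : s i != s k.
  by rewrite (inj_eq perm_inj); apply: contraTneq lt_ki => ->; rewrite ltnn.
have [lo hi] := generic j _ _ ne_sisk.
by move: lo hi; rewrite distnEr ?(ltnW (decr _ _ lt_ki)) // => -> ->.
Qed.

Section FrobeniusConjugation.
Variables (R : comNzRingType) (q : nat) (b : 'I_3 -> nat).
Local Notation p := q.+1.
Local Notation phi_mx := (map_mx (ps_phi (R := R) p)).
Hypothesis b_gap : forall i k : 'I_3, (k < i)%N -> (3 <= b k - b i <= p - 4)%N.
Implicit Types K L : 'M[pseries R]_3.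

Lemma b_ltn (i k : 'I_3) : (k < i)%N -> (b i < b k)%N.
Proof. by move=> /b_gap /andP [gt2 _]; rewrite -subn_gt0 (ltn_trans _ gt2). Qed.

Lemma phi_mx_lower_vX_dvd K : is_trig_mx (map_mx (@ps_const R) K)^T ->
  forall i k : 'I_3, (k < i)%N -> vX_dvd p (phi_mx K i k).
Proof.
move=> /is_trig_mxP K_upper i k lt_ki; rewrite mxE; apply: vX_dvd_phi.
by have := K_upper _ _ lt_ki; rewrite !mxE.
Qed.

Lemma vdiag_mul_phi_mx K : is_trig_mx (map_mx (@ps_const R) K)^T ->
  vdiag b *m phi_mx K = Ad_v b (phi_mx K) *m vdiag b.
Proof.
move=> K_upper; apply: vdiag_mulmx => i k lt_bik.
have lt_ki : (k < i)%N.
  case: ltngtP => // [lt_ik|/val_inj eq_ki]; last by rewrite eq_ki ltnn in lt_bik.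
  by move: lt_bik; rewrite ltnNge (ltnW (b_ltn lt_ik)).
apply: vX_dvdW (phi_mx_lower_vX_dvd K_upper lt_ki).
by case/andP: (b_gap lt_ki) => _ /leq_trans; apply; apply: leq_subr.
Qed.

Lemma Ad_v_phi_mx_offdiag K : is_trig_mx (map_mx (@ps_const R) K)^T ->
  forall i k : 'I_3, i != k -> vX_dvd 3 (Ad_v b (phi_mx K) i k).
Proof.
move=> K_upper i k ne_ik; rewrite mxE.
case: (ltngtP i k) => [lt_ik|lt_ki|/val_inj eq_ik]; last by rewrite eq_ik eqxx in ne_ik.
  rewrite ifT ?(ltnW (b_ltn lt_ik)) //; apply: vX_dvd_vXM.
  by case/andP: (b_gap lt_ik).
rewrite ifN -?ltnNge ?(b_ltn lt_ki) //; apply: vX_dvd_divvX.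
apply: vX_dvdW (phi_mx_lower_vX_dvd K_upper lt_ki).
by case/andP: (b_gap lt_ki); lia.
Qed.

Lemma Ad_v_phi_mx_mul_eq1 K L : K *m L = 1%:M ->
  is_trig_mx (map_mx (@ps_const R) K)^T -> is_trig_mx (map_mx (@ps_const R) L)^T ->
  Ad_v b (phi_mx K) *m Ad_v b (phi_mx L) = 1%:M.
Proof.
move=> KL K_upper L_upper; apply: (@mulmx_vdiagI _ b); rewrite mul1mx.
rewrite -mulmxA -(vdiag_mul_phi_mx L_upper) mulmxA -(vdiag_mul_phi_mx K_upper).
by rewrite -mulmxA -map_mxM KL map_mx1 mulmx1.
Qed.

Lemma Ad_v_phi_mx_in_D3 K L : K *m L = 1%:M -> L *m K = 1%:M ->
  is_trig_mx (map_mx (@ps_const R) K)^T -> is_trig_mx (map_mx (@ps_const R) L)^T ->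
  in_D3 (Ad_v b (phi_mx K)).
Proof.
move=> KL LK K_upper L_upper; split; last exact: Ad_v_phi_mx_offdiag.
by exists (Ad_v b (phi_mx L)); split; exact: Ad_v_phi_mx_mul_eq1.
Qed.

End FrobeniusConjugation.

Theorem proposition2p16 (p f : nat) (a : 'I_3 -> 'I_f -> nat) (j : 'I_f)
    (s : 'S_3) (R : comNzRingType) (I : 'M[pseries R]_3) :
  prime p -> (3 < p)%N ->
  in_range p f a -> weakly_generic p f a ->
  (* s orders the entries at index f-j-1 (= rev_ord j) decreasingly *)
  (a (s (1%R : 'I_3)) (rev_ord j) < a (s (0%R : 'I_3)) (rev_ord j))%N ->
  (a (s (2%R : 'I_3)) (rev_ord j) < a (s (1%R : 'I_3)) (rev_ord j))%N ->
  in_Iwahori I ->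
  forall phiI_inv : 'M[pseries R]_3,
    (* phiI_inv = phi(I)^{-1} *)
    map_mx (ps_phi p) I *m phiI_inv = 1%:M ->
    phiI_inv *m map_mx (ps_phi p) I = 1%:M ->
    (* Ad(v^{b_1},v^{b_2},v^{b_3})(phiI_inv) = M with M in D_3(R), i.e.
       diag(v^b) * phiI_inv = M * diag(v^b) *)
    exists M : 'M[pseries R]_3,
      in_D3 M /\
      vdiag (fun i => a (s i) (rev_ord j)) *m phiI_inv
        = M *m vdiag (fun i => a (s i) (rev_ord j)).
Proof.
move=> _ lt3p _ generic lt10 lt21 [ [J [IJ JI] ] I_upper] P IP PI.
have [q def_p] : exists q, p = q.+1 by exists p.-1; rewrite prednK // (ltn_trans _ lt3p).
subst p; set b := fun i => a (s i) (rev_ord j).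
have b_gap : forall i k : 'I_3, (k < i)%N -> (3 <= b k - b i <= q.+1 - 4)%N.
  exact: weakly_generic_gap generic lt10 lt21.
have I_trig : is_trig_mx (map_mx (@ps_const R) I)^T.
  by apply/is_trig_mxP => i k lt_ik; rewrite !mxE; exact: I_upper.
have J_trig : is_trig_mx (map_mx (@ps_const R) J)^T.
  by apply: trig_mx_linv I_trig; rewrite -trmx_mul -map_mxM JI map_mx1 trmx1.
have -> : P = map_mx (ps_phi q.+1) J.
  by rewrite -[P]mul1mx -(map_mx1 (ps_phi q.+1)) -JI map_mxM -mulmxA IP mulmx1.
exists (Ad_v b (map_mx (ps_phi q.+1) J)); split.
- exact: Ad_v_phi_mx_in_D3 JI IJ J_trig I_trig.
- exact: vdiag_mul_phi_mx.
Qed.
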